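(* Let $H$ and $F$ be $r$-uniform hypergraphs. The following are equivalent: (1) there is a homomorphism from $H$ to $F$; (2) there exists a function $g:i(F)\to i(H)$ such that the sets $A_x=\bigcap_{I\in i(F),\,x\in I} g(I)$, for $x\in V(F)$, cover $V(H)$, i.e. $\bigcup_{x\in V(F)}A_x=V(H)$.
   Context: A hypergraph $H$ has a finite vertex set $V(H)$ and a set $E(H)$ of subsets of $V(H)$; it is $r$-uniform if every edge has exactly $r$ elements. A set of vertices is independent if it contains no edge; $i(H)$ is the family of inclusion-wise maximal independent sets of $H$. A map $f:V(H)\to V(F)$ is a homomorphism if for every edge $h$ of $H$ the image $f(h)$ is an edge of $F$. An intersection over an empty family of subsets of $V(H)$ is taken to be $V(H)$. *)

From mathcomp Require Import all_boot.
Set Implicit Arguments. Unset Strict Implicit. Unset Printing Implicit Defensive.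

Definition uniform (V : finType) (E : {set {set V}}) (r : nat) : Prop :=
  forall e, e \in E -> #|e| = r.

Definition independent (V : finType) (E : {set {set V}}) (S : {set V}) : bool :=
  [forall e in E, ~~ (e \subset S)].

Definition max_indep (V : finType) (E : {set {set V}}) : {set {set V}} :=
  [set S | maxset (independent E) S].

Definition is_hom (VH VF : finType) (EH : {set {set VH}}) (EF : {set {set VF}})
  (f : VH -> VF) : Prop :=
  forall h, h \in EH -> f @: h \in EF.

(* A_x = intersection of g(I) over I in i(F) containing x (empty intersection = V(H)). *)
Definition Aset (VH VF : finType) (EF : {set {set VF}}) (g : {set VF} -> {set VH})
  (x : VF) : {set VH} :=
  \bigcap_(I in max_indep EF | x \in I) g I.

From mathcomp Require Import all_boot.

Set Implicit Arguments.
Unset Strict Implicit.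
Unset Printing Implicit Defensive.

(* Both conditions amount to a pair f : V(H) -> V(F), g : i(F) -> i(H) with
   f^-1(I) included in g(I) for every I in i(F).  The sets A_x cover V(H)
   exactly when such an f exists for g, namely any f with v in A_(f v).  A
   homomorphism pulls independent sets back to independent sets, so g(I) can
   be any maximal extension of f^-1(I).  Conversely, if f(h) were not an edge
   for an edge h of H, then by r-uniformity no edge fits inside f(h), which
   thus lies in some I in i(F); but then h lies in the independent set g(I). *)

Section Independence.

Variables (V : finType) (E : {set {set V}}).

Lemma max_indep_independent (S : {set V}) : S \in max_indep E -> independent E S.
Proof. by rewrite inE => /maxsetp. Qed.

Lemma independent_sub_max_indep (S : {set V}) :
  independent E S -> exists2 M, M \in max_indep E & S \subset M.
Proof. by case/maxset_exists=> M maxM SM; exists M; rewrite ?inE. Qed.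

Lemma independent_nonedge (S : {set V}) :
  (forall e, e \in E -> #|S| <= #|e|) -> S \notin E -> independent E S.
Proof.
move=> small nES; apply/forall_inP=> e eE; apply: contra nES => eS.
suff /eqP <- : e == S by [].
by rewrite eqEcard eS small.
Qed.

End Independence.

Lemma independent_hom_preim (VH VF : finType) (EH : {set {set VH}})
    (EF : {set {set VF}}) (f : VH -> VF) (I : {set VF}) :
  is_hom EH EF f -> independent EF I -> independent EH (f @^-1: I).
Proof.
move=> homf /forall_inP indI; apply/forall_inP=> h hE.
apply: contra (indI _ (homf _ hE)) => /subsetP hI.
by apply/subsetP=> _ /imsetP[v /hI + ->]; rewrite inE.
Qed.

Lemma mem_Aset (VH VF : finType) (EF : {set {set VF}})
    (g : {set VF} -> {set VH}) (x : VF) (v : VH) :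
  reflect (forall I, I \in max_indep EF -> x \in I -> v \in g I)
          (v \in Aset EF g x).
Proof.
apply: (iffP bigcapP) => [vA I maxI xI | vg I /andP[]]; last exact: vg.
by apply: vA; rewrite maxI.
Qed.

Lemma cover_AsetP (VH VF : finType) (EF : {set {set VF}})
    (g : {set VF} -> {set VH}) :
  (exists f : VH -> VF, forall I, I \in max_indep EF -> f @^-1: I \subset g I)
  <-> \bigcup_(x : VF) Aset EF g x = [set: VH].
Proof.
split=> [[f fg] | cover].
  apply/setP=> v; rewrite inE; apply/bigcupP; exists (f v) => //.
  by apply/mem_Aset=> I maxI fvI; apply: (subsetP (fg I maxI)); rewrite inE.
have /fin_all_exists[f Af] v : exists x, v \in Aset EF g x.
  by have /bigcupP[x _ vA] : v \in \bigcup_x Aset EF g x; [rewrite cover | exists x].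
exists f => I maxI; apply/subsetP=> v; rewrite inE.
by move/mem_Aset: (Af v); apply.
Qed.

Lemma hom_max_indep_preim (VH VF : finType) (EH : {set {set VH}})
    (EF : {set {set VF}}) (f : VH -> VF) :
  is_hom EH EF f ->
  exists2 g : {set VF} -> {set VH},
    forall I, I \in max_indep EF -> g I \in max_indep EH &
    forall I, I \in max_indep EF -> f @^-1: I \subset g I.
Proof.
move=> homf.
suff /fin_all_exists2[g gmax fg] I : exists2 M : {set VH},
    I \in max_indep EF -> M \in max_indep EH &
    I \in max_indep EF -> f @^-1: I \subset M by exists g.
have [maxI | _] := boolP (I \in max_indep EF); last by exists set0.
have indI := independent_hom_preim homf (max_indep_independent maxI).
by have [M maxM IM] := independent_sub_max_indep indI; exists M.
Qed.

Lemma max_indep_preim_hom (VH VF : finType) (EH : {set {set VH}})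
    (EF : {set {set VF}}) (r : nat) (f : VH -> VF) (g : {set VF} -> {set VH}) :
    uniform EH r -> uniform EF r ->
    (forall I, I \in max_indep EF -> g I \in max_indep EH) ->
    (forall I, I \in max_indep EF -> f @^-1: I \subset g I) ->
  is_hom EH EF f.
Proof.
move=> uH uF gmax fg h hE; apply/negPn/negP=> fhF.
have small e : e \in EF -> #|f @: h| <= #|e|.
  by move=> eF; rewrite (uF _ eF) -(uH _ hE) leq_imset_card.
have [I maxI fhI] := independent_sub_max_indep (independent_nonedge small fhF).
have /forall_inP/(_ _ hE)/negP := max_indep_independent (gmax _ maxI); apply.
apply: subset_trans (fg _ maxI); apply/subsetP=> v hv.
by rewrite inE (subsetP fhI) ?imset_f.
Qed.

Theorem mainTheorem12 (VH VF : finType) (EH : {set {set VH}}) (EF : {set {set VF}})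
  (r : nat) (uH : uniform EH r) (uF : uniform EF r) :
  (exists f : VH -> VF, is_hom EH EF f) <->
  (exists g : {set VF} -> {set VH},
      (forall I, I \in max_indep EF -> g I \in max_indep EH) /\
      \bigcup_(x : VF) Aset EF g x = [set: VH]).
Proof.
split=> [[f homf] | [g [gmax /cover_AsetP[f fg]]]].
  have [g gmax fg] := hom_max_indep_preim homf.
  by exists g; split=> //; apply/cover_AsetP; exists f.
by exists f; apply: max_indep_preim_hom uH uF gmax fg.
Qed.
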